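(* Let $G>I$ be a finite group with $Z(G)=I$ and let $(2A,3A,C)$ be a class vector of $G$ with $l^i(2A,3A,C)>0$, where $2A$ is a class of involutions and $3A$ is a class of elements of order $3$. Then $\Sigma^i(C,C,C,2A)$ contains $B_4$-orbits of length $4$. In addition, $l^i(C,C,3A^{-1})>0$, where $3A^{-1}=\{\tau^{-1}:\tau\in 3A\}$.
   Context: $\iota$ is the identity and $I$ the trivial group. A class vector is a tuple of non-trivial conjugacy classes. $\Sigma^i(C_1,\dots,C_m)$ is the set of $G$-conjugacy classes $[\sigma_1,\dots,\sigma_m]$ (simultaneous conjugation) of tuples with $\sigma_j\in C_j$, $\langle\sigma_1,\dots,\sigma_m\rangle=G$, $\sigma_1\cdots\sigma_m=\iota$, and $l^i(C_1,\dots,C_m)=|\Sigma^i(C_1,\dots,C_m)|$. The Hurwitz braid group $H_4=\langle\beta_2,\beta_3,\beta_4\rangle$ acts from the right by $[\underline{\sigma}]^{\beta_2}=[\sigma_1\sigma_2\sigma_1^{-1},\sigma_1,\sigma_3,\sigma_4]$, $[\underline{\sigma}]^{\beta_3}=[\sigma_1,\sigma_2\sigma_3\sigma_2^{-1},\sigma_2,\sigma_4]$, $[\underline{\sigma}]^{\beta_4}=[\sigma_1,\sigma_2,\sigma_3\sigma_4\sigma_3^{-1},\sigma_3]$, and the pure braid group $B_4$ is generated by $\beta_{12}=\beta_2^2$, $\beta_{13}=\beta_2^{-1}\beta_3^2\beta_2$, $\beta_{14}=\beta_2^{-1}\beta_3^{-1}\beta_4^2\beta_3\beta_2$, $\beta_{23}=\beta_3^2$,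 $\beta_{24}=\beta_3^{-1}\beta_4^2\beta_3$, $\beta_{34}=\beta_4^2$; it preserves each $\Sigma^i(C_1,\dots,C_4)$. *)

From mathcomp Require Import all_boot all_fingroup all_solvable.
Set Implicit Arguments. Unset Strict Implicit. Unset Printing Implicit Defensive.
Local Open Scope group_scope.

Section Braid.
Variable gT : finGroupType.

Definition T3 := (gT * gT * gT)%type.
Definition T4 := (gT * gT * gT * gT)%type.

Definition s1 (t : T4) := t.1.1.1.
Definition s2 (t : T4) := t.1.1.2.
Definition s3 (t : T4) := t.1.2.
Definition s4 (t : T4) := t.2.

Definition tconj3 (t : T3) (g : gT) : T3 := (t.1.1 ^ g, t.1.2 ^ g, t.2 ^ g).
Definition tconj4 (t : T4) (g : gT) : T4 := (s1 t ^ g, s2 t ^ g, s3 t ^ g, s4 t ^ g).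

Definition tclass3 (G : {set gT}) (t : T3) : {set T3} := [set tconj3 t g | g in G].
Definition tclass4 (G : {set gT}) (t : T4) : {set T4} := [set tconj4 t g | g in G].

Definition gtuples3 (G C1 C2 C3 : {set gT}) : {set T3} :=
  [set t : T3 | [&& t.1.1 \in C1, t.1.2 \in C2, t.2 \in C3,
     <<[set t.1.1; t.1.2; t.2]>> == G & t.1.1 * t.1.2 * t.2 == 1]].
Definition gtuples4 (G C1 C2 C3 C4 : {set gT}) : {set T4} :=
  [set t : T4 | [&& s1 t \in C1, s2 t \in C2, s3 t \in C3, s4 t \in C4,
     <<[set s1 t; s2 t; s3 t; s4 t]>> == G & s1 t * s2 t * s3 t * s4 t == 1]].

Definition Sigma3 (G C1 C2 C3 : {set gT}) : {set {set T3}} :=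
  [set tclass3 G t | t in gtuples3 G C1 C2 C3].
Definition Sigma4 (G C1 C2 C3 C4 : {set gT}) : {set {set T4}} :=
  [set tclass4 G t | t in gtuples4 G C1 C2 C3 C4].
Definition l3 (G C1 C2 C3 : {set gT}) : nat := #|Sigma3 G C1 C2 C3|.

(* Hurwitz braid generators (right action) and their inverses;
   note x ^ y = y^-1 * x * y in MathComp *)
Definition b2 (t : T4) : T4 := (s1 t * s2 t * (s1 t)^-1, s1 t, s3 t, s4 t).
Definition b3 (t : T4) : T4 := (s1 t, s2 t * s3 t * (s2 t)^-1, s2 t, s4 t).
Definition b4 (t : T4) : T4 := (s1 t, s2 t, s3 t * s4 t * (s3 t)^-1, s3 t).
Definition b2i (t : T4) : T4 := (s2 t, (s2 t)^-1 * s1 t * s2 t, s3 t, s4 t).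
Definition b3i (t : T4) : T4 := (s1 t, s3 t, (s3 t)^-1 * s2 t * s3 t, s4 t).
Definition b4i (t : T4) : T4 := (s1 t, s2 t, s4 t, (s4 t)^-1 * s3 t * s4 t).

(* pure braid generators; right action: [s]^(x y) = ([s]^x)^y *)
Definition beta12 (t : T4) : T4 := b2 (b2 t).
Definition beta13 (t : T4) : T4 := b2 (b3 (b3 (b2i t))).
Definition beta14 (t : T4) : T4 := b2 (b3 (b4 (b4 (b3i (b2i t))))).
Definition beta23 (t : T4) : T4 := b3 (b3 t).
Definition beta24 (t : T4) : T4 := b3 (b4 (b4 (b3i t))).
Definition beta34 (t : T4) : T4 := b4 (b4 t).

Definition pure_gens : seq (T4 -> T4) :=
  [:: beta12; beta13; beta14; beta23; beta24; beta34].

Definition brstep (G : {set gT}) : rel T4 := fun t t' =>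
  (t' \in tclass4 G t) || has (fun f => (t' == f t) || (t == f t')) pure_gens.

Definition B4orbit (G : {set gT}) (t : T4) : {set {set T4}} :=
  [set tclass4 G t' | t' in [set t' | connect (brstep G) t t']].

End Braid.

From HB Require Import structures.
From mathcomp Require Import all_boot all_fingroup all_solvable.
(* Imported last, since all_solvable also exports names s1, s2, ... *)
Set Implicit Arguments. Unset Strict Implicit. Unset Printing Implicit Defensive.

(* Let (a, b, c) be a generating triple of type (2A, 3A, C), so c = b^-1 a.
   The tuple (b^-1 a, a b^-1, b a b, b^-1 a b) = (c, c^a, c^b, a^b) lies in
   Sigma^i(C, C, C, 2A).  Each pure braid generator maps each of four explicit
   tuples of words in a and b (this one among them) to a G-conjugate of one of
   the four; these 24 identities only use a^2 = b^3 = 1, so they are certified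
   by computing normal forms in the free product Z/2 * Z/3.  Hence the
   B_4-orbit consists of the four classes of these tuples.  These classes are
   distinct: the tuples differ in which of their first three entries coincide,
   and the entries in question are different because a and b do not commute,
   as Z(G) = 1.
   Finally (c, c^a, b^-1) is a generating triple in (C, C, 3A^-1). *)

Section GroupFacts.
Variable gT : finGroupType.
Local Open Scope group_scope.
Implicit Types (x y : gT) (X Y : {set gT}) (G : {group gT}).

Lemma invg_order2 x : x ^+ 2 = 1 -> x^-1 = x.
Proof. by move=> x2; apply/eqP; rewrite eq_invg_mul -expg2 x2. Qed.

Lemma gen_eq_by_sub X Y G : <<X>> = G -> X \subset <<Y>> -> Y \subset G -> <<Y>> = G.
Proof.
move=> genX sXY sYG; apply/eqP; rewrite eqEsubset gen_subG sYG -genX.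
by rewrite gen_subG.
Qed.

Lemma commute_center_gen2 x y : commute x y -> y \in 'Z(<<[set x; y]>>).
Proof.
move=> cxy; rewrite inE mem_gen ?set22 //= cent_gen; apply/centP=> z.
by case/set2P=> ->; [exact/esym | exact: commute_refl].
Qed.

Lemma classes_mem_eq G C x : C \in classes G -> x \in C -> C = x ^: G.
Proof. by case/imsetP=> y _ -> /class_eqP. Qed.

End GroupFacts.

Section PureBraidAction.
Local Open Scope group_scope.
Variables (gT : finGroupType) (G : {group gT}).
Implicit Types (t : T4 gT) (g h : gT).

Lemma tconj4M t g h : tconj4 (tconj4 t g) h = tconj4 t (g * h).
Proof. by rewrite /tconj4 /s1 /s2 /s3 /s4 /= !conjgM. Qed.

Lemma tconj41 t : tconj4 t 1 = t.
Proof. by case: t => [[[x1 x2] x3] x4]; rewrite /tconj4 /s1 /s2 /s3 /s4 /= !conjg1. Qed.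

Lemma mem_tclass4 t : t \in tclass4 G t.
Proof. by apply/imsetP; exists 1; rewrite ?tconj41. Qed.

Lemma tclass4J t g : g \in G -> tclass4 G (tconj4 t g) = tclass4 G t.
Proof.
move=> gG; apply/setP=> u; apply/imsetP/imsetP => [[h hG ->] | [h hG ->]].
  by exists (g * h); rewrite ?groupM // tconj4M.
by exists (g^-1 * h); rewrite ?groupM ?groupV // tconj4M mulKVg.
Qed.

Lemma b2J t g : b2 (tconj4 t g) = tconj4 (b2 t) g.
Proof. by rewrite /b2 /tconj4 /s1 /s2 /s3 /s4 /= !conjMg conjVg. Qed.
Lemma b3J t g : b3 (tconj4 t g) = tconj4 (b3 t) g.
Proof. by rewrite /b3 /tconj4 /s1 /s2 /s3 /s4 /= !conjMg conjVg. Qed.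
Lemma b4J t g : b4 (tconj4 t g) = tconj4 (b4 t) g.
Proof. by rewrite /b4 /tconj4 /s1 /s2 /s3 /s4 /= !conjMg conjVg. Qed.
Lemma b2iJ t g : b2i (tconj4 t g) = tconj4 (b2i t) g.
Proof. by rewrite /b2i /tconj4 /s1 /s2 /s3 /s4 /= !conjMg conjVg. Qed.
Lemma b3iJ t g : b3i (tconj4 t g) = tconj4 (b3i t) g.
Proof. by rewrite /b3i /tconj4 /s1 /s2 /s3 /s4 /= !conjMg conjVg. Qed.

Lemma pure_gensJ k t g : k < size (pure_gens gT) ->
  nth id (pure_gens gT) k (tconj4 t g) = tconj4 (nth id (pure_gens gT) k t) g.
Proof.
case: k => [|[|[|[|[|[|k]]]]]] //= _;
  by rewrite /beta12 /beta13 /beta14 /beta23 /beta24 /beta34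
             ?b2iJ ?b3iJ ?b4J ?b4J ?b3J ?b3J ?b2J ?b2J.
Qed.

Lemma pure_gens_inj k : k < size (pure_gens gT) -> injective (nth id (pure_gens gT) k).
Proof.
have conjK (x y : gT) : x^-1 * (x * y * x^-1) * x = y by rewrite !mulgA mulVg mul1g mulgKV.
have conjVK (x y : gT) : x * (x^-1 * y * x) * x^-1 = y by rewrite !mulgA mulgV mul1g mulgK.
have b2K : cancel (@b2 gT) (@b2i gT).
  by move=> -[[[x1 x2] x3] x4]; rewrite /b2 /b2i /s1 /s2 /s3 /s4 /= conjK.
have b3K : cancel (@b3 gT) (@b3i gT).
  by move=> -[[[x1 x2] x3] x4]; rewrite /b3 /b3i /s1 /s2 /s3 /s4 /= conjK.
have b4K : cancel (@b4 gT) (@b4i gT).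
  by move=> -[[[x1 x2] x3] x4]; rewrite /b4 /b4i /s1 /s2 /s3 /s4 /= conjK.
have b2iK : cancel (@b2i gT) (@b2 gT).
  by move=> -[[[x1 x2] x3] x4]; rewrite /b2 /b2i /s1 /s2 /s3 /s4 /= conjVK.
have b3iK : cancel (@b3i gT) (@b3 gT).
  by move=> -[[[x1 x2] x3] x4]; rewrite /b3 /b3i /s1 /s2 /s3 /s4 /= conjVK.
case: k => [|[|[|[|[|[|k]]]]]] //= _;
  rewrite /beta12 /beta13 /beta14 /beta23 /beta24 /beta34;
  by do ![apply: inj_comp]; apply: can_inj; eassumption.
Qed.

Lemma brstep_pure_gens k t : k < size (pure_gens gT) ->
  brstep G t (nth id (pure_gens gT) k t).
Proof. by move=> lt_k; apply/orP; right; apply/(has_nthP id); exists k; rewrite ?eqxx. Qed.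

Lemma closed_brstep (S : {set T4 gT}) :
    (forall t g, t \in S -> g \in G -> tconj4 t g \in S) ->
    (forall k t, k < size (pure_gens gT) -> t \in S -> nth id (pure_gens gT) k t \in S) ->
  closed (brstep G) S.
Proof.
move=> S_conj S_pure t t'; case/orP => [/imsetP[g gG ->] | /(has_nthP id)[k lt_k]].
  apply/idP/idP => [/S_conj-> // |].
  by move/S_conj/(_ (groupVr gG)); rewrite tconj4M mulgV tconj41.
set f := nth id _ k; have f_inj := pure_gens_inj lt_k.
have fS : f @: S = S.
  apply/eqP; rewrite eqEcard card_imset // leqnn andbT.
  by apply/subsetP=> _ /imsetP[u uS ->]; apply: S_pure.
have S_pureV u : f u \in S -> u \in S by rewrite -{1}fS (mem_imset _ _ f_inj).
by case/orP=> /eqP->; apply/idP/idP;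
  [apply: S_pure | apply: S_pureV | apply: S_pureV | apply: S_pure].
Qed.

Lemma B4orbit_eq (I : finType) (r : I -> T4 gT) (i0 : I) :
    (forall i k, k < size (pure_gens gT) ->
       exists j, exists2 g, g \in G & nth id (pure_gens gT) k (r i) = tconj4 (r j) g) ->
    (forall i, connect (brstep G) (r i0) (r i)) ->
  B4orbit G (r i0) = [set tclass4 G (r i) | i : I].
Proof.
move=> r_moves r_conn; set S := \bigcup_(i : I) tclass4 G (r i).
have memS t : reflect (exists i, exists2 g, g \in G & t = tconj4 (r i) g) (t \in S).
  apply: (iffP bigcupP) => [[i _ /imsetP[g gG ->]] | [i [g gG ->]]]; first by exists i, g.
  by exists i; rewrite ?imset_f.
have S_conj t g : t \in S -> g \in G -> tconj4 t g \in S.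
  by case/memS=> i [h hG ->] gG; apply/memS; exists i, (h * g); rewrite ?groupM ?tconj4M.
have S_pure k t : k < size (pure_gens gT) -> t \in S -> nth id (pure_gens gT) k t \in S.
  move=> lt_k /memS[i [h hG ->]]; rewrite pure_gensJ //.
  have [j [g gG ->]] := r_moves i k lt_k.
  by rewrite tconj4M; apply/memS; exists j, (g * h); rewrite ?groupM.
have S_closed := closed_brstep S_conj S_pure.
have r0S : r i0 \in S by apply/memS; exists i0, 1; rewrite ?tconj41.
apply/setP=> X; apply/imsetP/imsetP => [[t] | [i _ ->]]; last by exists (r i); rewrite ?inE.
rewrite inE => /(closed_connect S_closed); rewrite r0S => /esym/memS[i [g gG ->]] ->.
by exists i; rewrite ?tclass4J.
Qed.

Definition tuple_pattern (t : T4 gT) : seq bool := [:: s1 t == s2 t; s1 t == s3 t; s2 t == s3 t].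

Lemma tclass4_pattern t t' : tclass4 G t = tclass4 G t' -> tuple_pattern t = tuple_pattern t'.
Proof.
move=> eq_tt'; have /imsetP[g _ ->] : t' \in tclass4 G t by rewrite eq_tt' mem_tclass4.
by rewrite /tuple_pattern /tconj4 /s1 /s2 /s3 /= !(inj_eq (conjg_inj g)).
Qed.

End PureBraidAction.

(* Words in a, b and b^-1; [wnorm] computes the reduced form in the free
   product <a | a^2> * <b | b^3>. *)
Inductive letter := La | Lb | LbV.

Definition letter_code l := match l with La => 0 | Lb => 1 | LbV => 2 end.
Definition code_letter n := match n with 0 => La | 1 => Lb | _ => LbV end.
Lemma letter_codeK : cancel letter_code code_letter. Proof. by case. Qed.
HB.instance Definition _ := Equality.copy letter (can_type letter_codeK).

Definition word := seq letter.

Definition linv l := match l with La => La | Lb => LbV | LbV => Lb end.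
Definition winv (w : word) : word := rev (map linv w).

Definition wcons (x : letter) (w : word) : word :=
  match x, w with
  | La, La :: w' | Lb, LbV :: w' | LbV, Lb :: w' => w'
  | Lb, Lb :: w' => LbV :: w'
  | LbV, LbV :: w' => Lb :: w'
  | _, _ => x :: w
  end.

Fixpoint wnorm (w : word) : word := if w is x :: w' then wcons x (wnorm w') else [::].

Definition wtuple := (word * word * word * word)%type.

Definition wb2 (X : wtuple) : wtuple :=
  let: (x1, x2, x3, x4) := X in (x1 ++ x2 ++ winv x1, x1, x3, x4).
Definition wb3 (X : wtuple) : wtuple :=
  let: (x1, x2, x3, x4) := X in (x1, x2 ++ x3 ++ winv x2, x2, x4).
Definition wb4 (X : wtuple) : wtuple :=
  let: (x1, x2, x3, x4) := X in (x1, x2, x3 ++ x4 ++ winv x3, x3).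
Definition wb2i (X : wtuple) : wtuple :=
  let: (x1, x2, x3, x4) := X in (x2, winv x2 ++ x1 ++ x2, x3, x4).
Definition wb3i (X : wtuple) : wtuple :=
  let: (x1, x2, x3, x4) := X in (x1, x3, winv x3 ++ x2 ++ x3, x4).

Definition wpure_gens : seq (wtuple -> wtuple) :=
  [:: fun X => wb2 (wb2 X); fun X => wb2 (wb3 (wb3 (wb2i X)));
      fun X => wb2 (wb3 (wb4 (wb4 (wb3i (wb2i X))))); fun X => wb3 (wb3 X);
      fun X => wb3 (wb4 (wb4 (wb3i X))); fun X => wb4 (wb4 X)].

Definition wconj4 (X : wtuple) (g : word) : wtuple :=
  let: (x1, x2, x3, x4) := X in
  (winv g ++ x1 ++ g, winv g ++ x2 ++ g, winv g ++ x3 ++ g, winv g ++ x4 ++ g).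

Definition wequiv4 (X Y : wtuple) : bool :=
  let: (x1, x2, x3, x4) := X in let: (y1, y2, y3, y4) := Y in
  [&& wnorm x1 == wnorm y1, wnorm x2 == wnorm y2, wnorm x3 == wnorm y3 & wnorm x4 == wnorm y4].

(* The table [orbit_move] was obtained by computing the B_4-orbit of
   [orbit_rep 0] in the free product. *)
Definition orbit_rep (i : nat) : wtuple :=
  match i with
  | 0 => ([:: LbV; La], [:: La; LbV], [:: Lb; La; Lb], [:: LbV; La; Lb])
  | 1 => ([:: La; LbV], [:: Lb; La; Lb], [:: Lb; La; Lb], [:: LbV; La; Lb])
  | 2 => ([:: Lb; La; Lb], [:: La; LbV], [:: Lb; La; Lb], [:: Lb; La; LbV])
  | _ => ([:: LbV; La], [:: LbV; La], [:: Lb; La; Lb], [:: LbV; La; LbV; La; Lb; La; Lb])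
  end.

Definition orbit_move (i k : nat) : nat * word :=
  match i, k with
  | 0, 0 => (1, [::])
  | 0, 1 => (0, [::])
  | 0, 2 => (2, [::])
  | 0, 3 => (2, [:: LbV])
  | 0, 4 => (3, [::])
  | 0, _ => (1, [:: Lb])
  | 1, 0 => (2, [:: Lb; La; Lb])
  | 1, 1 => (3, [:: LbV; La; LbV; La; Lb])
  | 1, 2 => (1, [:: Lb; La; LbV; La; Lb])
  | 1, 3 => (1, [::])
  | 1, 4 => (0, [:: LbV; La; LbV])
  | 1, _ => (2, [:: Lb; La; LbV])
  | 2, 0 => (0, [:: LbV; La; LbV])
  | 2, 1 => (1, [:: Lb])
  | 2, 2 => (3, [:: LbV; La; LbV])
  | 2, 3 => (3, [:: LbV; La; Lb])
  | 2, 4 => (2, [:: Lb; La; LbV; La; Lb])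
  | 2, _ => (0, [:: La; LbV])
  | _, 0 => (3, [::])
  | _, 1 => (2, [:: Lb; La; Lb; La; Lb])
  | _, 2 => (0, [:: Lb; La; Lb])
  | _, 3 => (0, [:: La; Lb])
  | _, 4 => (1, [:: Lb; La; Lb])
  | _, _ => (3, [:: LbV; La; LbV; La])
  end.

Lemma orbit_moveP i k : i < 4 -> k < size wpure_gens ->
  let: (j, g) := orbit_move i k in
  (j < 4) && wequiv4 (nth id wpure_gens k (orbit_rep i)) (wconj4 (orbit_rep j) g).
Proof. by case: i => [|[|[|[|i]]]] //; case: k => [|[|[|[|[|[|k]]]]]]. Qed.

Section WordEvaluation.
Local Open Scope group_scope.
Variables (gT : finGroupType) (a b : gT).
Hypotheses (expa2 : a ^+ 2 = 1) (expb3 : b ^+ 3 = 1).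

Definition leval l := match l with La => a | Lb => b | LbV => b^-1 end.
Definition weval (w : word) : gT := \prod_(l <- w) leval l.

Lemma weval_cat u v : weval (u ++ v) = weval u * weval v.
Proof. exact: big_cat. Qed.

Lemma weval_wcons x w : weval (wcons x w) = leval x * weval w.
Proof.
have aa : a * a = 1 by rewrite -expg2.
have bb : b * b = b^-1 by apply/eqP; rewrite eq_sym eq_invg_mul -expb3 !expgS expg0 mulg1.
have bVbV : b^-1 * b^-1 = b by rewrite -invMg bb invgK.
by case: x; case: w => [|[] w] /=; rewrite /weval ?big_cons //= mulgA
  ?aa ?bb ?bVbV ?mulgV ?mulVg ?mul1g.
Qed.

Lemma weval_wnorm w : weval (wnorm w) = weval w.
Proof. by elim: w => //= x w IHw; rewrite weval_wcons IHw /weval big_cons. Qed.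

Lemma weval_eq u v : wnorm u = wnorm v -> weval u = weval v.
Proof. by move=> eq_uv; rewrite -weval_wnorm eq_uv weval_wnorm. Qed.

Lemma weval_winv w : weval (winv w) = (weval w)^-1.
Proof.
have aV := invg_order2 expa2.
elim: w => [|x w IHw]; first by rewrite /weval big_nil invg1.
rewrite /winv /= rev_cons -cats1 weval_cat -/(winv w) IHw /weval big_cons big_cons big_nil mulg1.
case: x => /=; rewrite invMg ?aV ?invgK //.
Qed.

Lemma weval_conj u g w : wnorm w = wnorm (winv g ++ u ++ g) -> weval w = weval u ^ weval g.
Proof. by move/weval_eq->; rewrite !weval_cat weval_winv. Qed.

Lemma weval_mem (H : {group gT}) w : a \in H -> b \in H -> weval w \in H.
Proof. by move=> aH bH; apply: group_prod => -[] _ //=; rewrite groupV. Qed.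

Lemma weval_neq p q u v : ~ commute a b ->
  wnorm (p ++ u ++ q) = [:: La; Lb] -> wnorm (p ++ v ++ q) = [:: Lb; La] -> weval u != weval v.
Proof.
move=> nab norm_u norm_v; apply/eqP=> eq_uv; apply: nab.
have : weval (p ++ u ++ q) = weval (p ++ v ++ q) by rewrite !weval_cat eq_uv.
rewrite (weval_eq (v := [:: La; Lb]) norm_u) (weval_eq (v := [:: Lb; La]) norm_v).
by rewrite /weval !big_cons big_nil !mulg1.
Qed.

Lemma weval_class (G : {group gT}) u g w : a \in G -> b \in G ->
  wnorm w = wnorm (winv g ++ u ++ g) -> weval w \in weval u ^: G.
Proof. by move=> aG bG /weval_conj->; rewrite memJ_class ?weval_mem. Qed.

Definition weval4 (X : wtuple) : T4 gT :=
  let: (x1, x2, x3, x4) := X in (weval x1, weval x2, weval x3, weval x4).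

Lemma weval4_pure_gens k X : k < size wpure_gens ->
  nth id (pure_gens gT) k (weval4 X) = weval4 (nth id wpure_gens k X).
Proof.
have conj_cat x y : weval (x ++ y ++ winv x) = weval x * weval y * (weval x)^-1.
  by rewrite !weval_cat weval_winv mulgA.
have cat_conj x y : weval (winv y ++ x ++ y) = (weval y)^-1 * weval x * weval y.
  by rewrite !weval_cat weval_winv mulgA.
have e2 X' : b2 (weval4 X') = weval4 (wb2 X').
  by case: X' => [[[x1 x2] x3] x4]; rewrite /= conj_cat.
have e3 X' : b3 (weval4 X') = weval4 (wb3 X').
  by case: X' => [[[x1 x2] x3] x4]; rewrite /= conj_cat.
have e4 X' : b4 (weval4 X') = weval4 (wb4 X').
  by case: X' => [[[x1 x2] x3] x4]; rewrite /= conj_cat.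
have e2i X' : b2i (weval4 X') = weval4 (wb2i X').
  by case: X' => [[[x1 x2] x3] x4]; rewrite /= cat_conj.
have e3i X' : b3i (weval4 X') = weval4 (wb3i X').
  by case: X' => [[[x1 x2] x3] x4]; rewrite /= cat_conj.
case: k => [|[|[|[|[|[|k]]]]]] //= _;
  by rewrite /beta12 /beta13 /beta14 /beta23 /beta24 /beta34 ?e2i ?e3i ?e4 ?e4 ?e3 ?e3 ?e2 ?e2.
Qed.

Lemma weval4_wconj4 X g : weval4 (wconj4 X g) = tconj4 (weval4 X) (weval g).
Proof.
by case: X => [[[x1 x2] x3] x4]; rewrite /= /tconj4 /s1 /s2 /s3 /s4 /= !weval_cat weval_winv.
Qed.

Lemma weval4_wequiv4 X Y : wequiv4 X Y -> weval4 X = weval4 Y.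
Proof.
case: X Y => [[[x1 x2] x3] x4] [[[y1 y2] y3] y4] /= /and4P[] /eqP/weval_eq-> /eqP/weval_eq->.
by move=> /eqP/weval_eq-> /eqP/weval_eq->.
Qed.

End WordEvaluation.

Section PureBraidOrbit.
Local Open Scope group_scope.
Variables (gT : finGroupType) (G : {group gT}) (a b : gT).
Hypotheses (aG : a \in G) (bG : b \in G) (expa2 : a ^+ 2 = 1) (expb3 : b ^+ 3 = 1).

Definition orbit_tuple (i : 'I_4) : T4 gT := weval4 a b (orbit_rep i).

Lemma orbit_tuple_moves i k : k < size (pure_gens gT) ->
  exists j, exists2 g, g \in G & nth id (pure_gens gT) k (orbit_tuple i) = tconj4 (orbit_tuple j) g.
Proof.
move=> lt_k; have := orbit_moveP (ltn_ord i) lt_k; case: orbit_move => j g.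
case/andP=> lt_j /(weval4_wequiv4 expa2 expb3).
rewrite -(weval4_pure_gens b expa2) // (weval4_wconj4 b expa2) => ->.
by exists (Ordinal lt_j), (weval a b g); rewrite ?weval_mem.
Qed.

Lemma orbit_tuple_connect i : connect (brstep G) (orbit_tuple ord0) (orbit_tuple i).
Proof.
have step k (j : 'I_4) : k < size (pure_gens gT) -> orbit_move 0 k = (j : nat, [::]) ->
    connect (brstep G) (orbit_tuple ord0) (orbit_tuple j).
  move=> lt_k move_k; apply: connect1; have := orbit_moveP (isT : 0 < 4) lt_k.
  rewrite move_k => /andP[_ /(weval4_wequiv4 expa2 expb3)].
  rewrite -(weval4_pure_gens b expa2) // (weval4_wconj4 b expa2) /weval big_nil tconj41.
  rewrite /orbit_tuple => <-.
  exact: brstep_pure_gens.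
by case: i => -[|[|[|[|i]]]] lt_i; [exact: connect0 | exact: (step 0) | exact: (step 2)
  | exact: (step 4) | ].
Qed.

Hypothesis nab : ~ commute a b.

(* With x = b^-1 a, y = a b^-1 and z = b a b, the orbit tuples are
   (x, y, z, _), (y, z, z, _), (z, y, z, _) and (x, x, z, _). *)
Lemma orbit_tuple_pattern (i : 'I_4) :
  tuple_pattern (orbit_tuple i) = [:: i == 3%N :> nat; i == 2%N :> nat; i == 1%N :> nat].
Proof.
have neq := @weval_neq _ a b expa2 expb3.
have neq_xy := negbTE (neq [:: Lb] [:: Lb] [:: LbV; La] [:: La; LbV] nab erefl erefl).
have neq_zx := negbTE (neq [:: LbV] [::] [:: Lb; La; Lb] [:: LbV; La] nab erefl erefl).
have neq_yz := negbTE (neq [::] [:: LbV] [:: La; LbV] [:: Lb; La; Lb] nab erefl erefl).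
have neq_xz : (weval a b [:: LbV; La] == weval a b [:: Lb; La; Lb]) = false by rewrite eq_sym.
have neq_zy : (weval a b [:: Lb; La; Lb] == weval a b [:: La; LbV]) = false by rewrite eq_sym.
by case: i => -[|[|[|[|i]]]] //= lt_i;
  rewrite /tuple_pattern /= ?eqxx ?neq_xy ?neq_xz ?neq_yz ?neq_zy.
Qed.

Lemma card_B4orbit_orbit_tuple : #|B4orbit G (orbit_tuple ord0)| = 4.
Proof.
rewrite (B4orbit_eq orbit_tuple_moves orbit_tuple_connect) card_imset ?card_ord //.
move=> i j /tclass4_pattern; rewrite !orbit_tuple_pattern => eq_ij; apply/val_inj/eqP.
by move: eq_ij; case: i j => -[|[|[|[|i]]]] ? [[|[|[|[|j]]]] ?] //; case.
Qed.

Hypothesis genG : <<[set a; b]>> = G.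

Let entry_class x u g w :
  weval a b u = x -> wnorm w = wnorm (winv g ++ u ++ g) -> weval a b w \in x ^: G.
Proof. by move=> <-; apply: weval_class. Qed.

Let weval_c : weval a b [:: LbV; La] = b^-1 * a.
Proof. by rewrite /weval !big_cons big_nil mulg1. Qed.

Lemma orbit_tuple_gtuples4 : orbit_tuple ord0 \in
  gtuples4 G ((b^-1 * a) ^: G) ((b^-1 * a) ^: G) ((b^-1 * a) ^: G) (a ^: G).
Proof.
rewrite inE /orbit_tuple /=; apply/and5P; split.
- exact: (entry_class (g := [::]) weval_c).
- exact: (entry_class (g := [:: La]) weval_c).
- exact: (entry_class (g := [:: Lb]) weval_c).
- by apply: (entry_class (u := [:: La]) (g := [:: Lb])); rewrite // /weval big_seq1.
apply/andP; split; last first.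
  by apply/eqP; rewrite -!weval_cat (weval_eq expa2 expb3 (v := [::])) // /weval big_nil.
apply/eqP/(gen_eq_by_sub genG); last first.
  by apply/subsetP=> x; rewrite !inE -!orbA => /or4P[]/eqP->; apply: weval_mem.
set Y := [set _; _; _; _]; set x1 := [:: LbV; La]; set x4 := [:: LbV; La; Lb].
have x1Y : weval a b x1 \in <<Y>> by rewrite mem_gen // !inE eqxx.
have x4Y : weval a b x4 \in <<Y>> by rewrite mem_gen // !inE eqxx ?orbT.
have Eb : weval a b (winv x1 ++ winv x4) = b.
  by rewrite (weval_eq expa2 expb3 (v := [:: Lb])) // /weval big_seq1.
have Ea : weval a b (winv x1 ++ winv x4 ++ x1) = a.
  by rewrite (weval_eq expa2 expb3 (v := [:: La])) // /weval big_seq1.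
apply/subsetP=> x /set2P[]->; [rewrite -[X in X \in _]Ea | rewrite -[X in X \in _]Eb];
  by rewrite !weval_cat !(weval_winv b expa2) ?groupM ?groupV.
Qed.

Lemma Sigma4_B4orbit_card4 :
  exists2 t : T4 gT, tclass4 G t \in Sigma4 G ((b^-1 * a) ^: G) ((b^-1 * a) ^: G)
                                       ((b^-1 * a) ^: G) (a ^: G)
                   & #|B4orbit G t| = 4.
Proof.
by exists (orbit_tuple ord0); rewrite ?imset_f ?orbit_tuple_gtuples4 ?card_B4orbit_orbit_tuple.
Qed.

Lemma l3_inverse_class_gt0 (A3 : {set gT}) : b \in A3 ->
  0 < l3 G ((b^-1 * a) ^: G) ((b^-1 * a) ^: G) [set x^-1 | x in A3].
Proof.
set y1 := [:: LbV; La]; set y3 := [:: LbV].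
move=> bA3; apply/card_gt0P.
exists (tclass3 G (weval a b y1, weval a b [:: La; LbV], weval a b y3)).
apply: imset_f; rewrite inE /=; apply/and5P; split.
- exact: (entry_class (g := [::]) weval_c).
- exact: (entry_class (g := [:: La]) weval_c).
- by rewrite /weval big_seq1 imset_f.
- apply/eqP/(gen_eq_by_sub genG); last first.
    by apply/subsetP=> x; rewrite !inE -!orbA => /or3P[]/eqP->; apply: weval_mem.
  set Y := [set _; _; _].
  have y1Y : weval a b y1 \in <<Y>> by rewrite mem_gen // !inE eqxx.
  have y3Y : weval a b y3 \in <<Y>> by rewrite mem_gen // !inE eqxx ?orbT.
  have Eb : weval a b (winv y3) = b by rewrite /weval big_seq1.
  have Ea : weval a b (winv y3 ++ y1) = a.
    by rewrite (weval_eq expa2 expb3 (v := [:: La])) // /weval big_seq1.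
  apply/subsetP=> x /set2P[]->; [rewrite -[X in X \in _]Ea | rewrite -[X in X \in _]Eb];
    by rewrite ?weval_cat !(weval_winv b expa2) ?groupM ?groupV.
by rewrite -!weval_cat (weval_eq expa2 expb3 (v := [::])) // /weval big_nil.
Qed.

End PureBraidOrbit.

Local Open Scope group_scope.

Theorem corollary5 (gT : finGroupType) (G : {group gT}) (A2 A3 C : {set gT}) :
  G :!=: 1 -> 'Z(G) = 1 ->
  A2 \in classes G -> A3 \in classes G -> C \in classes G ->
  A2 != 1 -> A3 != 1 -> C != 1 ->
  (forall x, x \in A2 -> #[x] = 2%N) ->
  (forall x, x \in A3 -> #[x] = 3%N) ->
  (0 < l3 G A2 A3 C)%N ->
  (exists2 t : T4 gT, tclass4 G t \in Sigma4 G C C C A2 & #|B4orbit G t| = 4%N)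
  /\ (0 < l3 G C C [set x^-1 | x in A3])%N.
Proof.
move=> _ ZG A2cl _ Ccl _ _ _ o2 o3 /card_gt0P[_ /imsetP[[[a b] c] abc _]].
rewrite inE /= in abc; case/and5P: abc => aA2 bA3 cC /eqP genabc /eqP abc1.
have expa2 : a ^+ 2 = 1 by rewrite -(o2 a aA2) expg_order.
have expb3 : b ^+ 3 = 1 by rewrite -(o3 b bA3) expg_order.
have cE : c = b^-1 * a.
  by apply/esym/eqP; rewrite -(invg_order2 expa2) -invMg eq_invg_mul abc1.
have aG : a \in G by rewrite -genabc mem_gen // !inE eqxx.
have bG : b \in G by rewrite -genabc mem_gen // !inE eqxx orbT.
have genab : <<[set a; b]>> = G.
  apply: (gen_eq_by_sub genabc); last by apply/subsetP=> x /set2P[]->.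
  apply/subsetP=> x; rewrite !inE -!orbA => /or3P[]/eqP->;
    by rewrite ?cE ?groupM ?groupV ?mem_gen // !inE eqxx ?orbT.
have nab : ~ commute a b.
  move/commute_center_gen2; rewrite genab ZG => /set1P b1.
  by have := o3 b bA3; rewrite b1 order1.
rewrite (classes_mem_eq Ccl cC) (classes_mem_eq A2cl aA2) cE.
split; [exact: Sigma4_B4orbit_card4 | exact: l3_inverse_class_gt0].
Qed.
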